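(* Consider $f:\mathbb R^n\to\mathbb R$ convex and continuously differentiable, $A\in\mathbb R^{m\times n}$, $b\in\mathbb R^m$, and the parameters and algorithm described in the context. For the same initial points and parameters, a sequence $\{(x_k,\lambda_k)\}_{k\ge0}$ is generated by the algorithm (Case I, resp. Case II) if and only if for every $k\ge1$ it satisfies $x_{k+1}-\bar x_k=-\gamma\big[g_{k+1}+A^\top(\lambda_{k+1}+\alpha_k(\lambda_{k+1}-\lambda_k))+\beta A^\top(Ax_{k+1}-b)\big]$ and $\lambda_{k+1}-\bar\lambda_k=\delta\big[Ax_{k+1}-b+\alpha_kA(x_{k+1}-x_k)\big]$, where $g_{k+1}=\nabla f(x_{k+1})$ in Case I and $g_{k+1}=\nabla f(\bar x_k)$ in Case II.
   Context: Parameter sequence: $\{t_k\}_{k\ge1}$ is nondecreasing, $t_1=1$, $t_k>1$ for all $k>2$, $t_k\to+\infty$, and $t_{k+1}^2-t_k^2\le\rho t_{k+1}$ for all $k\ge 1$, with fixed $\rho\in(0,1]$. Fix $\eta\in[\rho,1]$, $\gamma>0$, $\delta>0$, $\beta\ge0$. Algorithm: initial points $x_0=x_1\in\mathbb R^n$, $\lambda_0=\lambda_1\in\mathbb R^m$. For $k=1,2,\dots$: set $\alpha_k=(t_{k+1}-\eta)/\eta$, $c_k=t_{k+1}/\eta$, $\bar x_k=x_k+\frac{t_k-1}{t_{k+1}}(x_k-x_{k-1})$, $\bar\lambda_k=\lambda_k+\frac{t_k-1}{t_{k+1}}(\lambda_k-\lambda_{k-1})$, $p_k=c_k\bar\lambda_k-\alpha_k\lambda_k$,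 $r_k=\alpha_kAx_k+b$. Case I ($f$ convex and $C^1$): $x_{k+1}=\arg\min_{x}\{f(x)+\frac\beta2\|Ax-b\|^2+\frac1{2\gamma}\|x-\bar x_k\|^2+\langle p_k,Ax-b\rangle+\frac\delta2\|c_kAx-r_k\|^2\}$. Case II ($f$ convex with $L$-Lipschitz gradient, and $\gamma\le 1/L$): $x_{k+1}=\arg\min_{x}\{\langle\nabla f(\bar x_k),x\rangle+\frac\beta2\|Ax-b\|^2+\frac1{2\gamma}\|x-\bar x_k\|^2+\langle p_k,Ax-b\rangle+\frac\delta2\|c_kAx-r_k\|^2\}$. Then $\lambda_{k+1}=\bar\lambda_k+\delta(c_kAx_{k+1}-r_k)$. *)

From HB Require Import structures.
From mathcomp Require Import all_boot all_order all_algebra.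
From mathcomp Require Import all_classical all_reals all_analysis.
Set Implicit Arguments. Unset Strict Implicit. Unset Printing Implicit Defensive.
Import Order.TTheory GRing.Theory Num.Theory.
Import numFieldNormedType.Exports.
Local Open Scope classical_set_scope.
Local Open Scope ring_scope.

Section Defs.
Variable R : realType.

Definition inner (p : nat) (u v : 'cV[R]_p) : R := \sum_(i < p) u i ord0 * v i ord0.
Definition sqnorm (p : nat) (u : 'cV[R]_p) : R := inner u u.
Definition enorm (p : nat) (u : 'cV[R]_p) : R := Num.sqrt (sqnorm u).

Definition convex_fun (n : nat) (f : 'cV[R]_n -> R) : Prop :=
  forall (x y : 'cV[R]_n) (s : R), 0 <= s -> s <= 1 ->
    f (s *: x + (1 - s) *: y) <= s * f x + (1 - s) * f y.

Definition is_gradient (n : nat) (f : 'cV[R]_n -> R) (g : 'cV[R]_n -> 'cV[R]_n) : Prop :=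
  forall x : 'cV[R]_n, differentiable f x /\ forall h : 'cV[R]_n, 'd f x h = inner (g x) h.

Definition lipschitz_grad (n : nat) (g : 'cV[R]_n -> 'cV[R]_n) (L : R) : Prop :=
  forall x y : 'cV[R]_n, enorm (g x - g y) <= L * enorm (x - y).

Definition param_assumptions (t : nat -> R) (rho eta gamma delta beta : R) : Prop :=
  [/\ (forall k, (1 <= k)%N -> t k <= t k.+1) /\ t 1%N = 1,
      (forall k, (2 < k)%N -> 1 < t k),
      t @ \oo --> +oo,
      (forall k, (1 <= k)%N -> t k.+1 ^+ 2 - t k ^+ 2 <= rho * t k.+1)
    & [/\ 0 < rho, rho <= 1, rho <= eta, eta <= 1 &
        [/\ 0 < gamma, 0 < delta & 0 <= beta]]].

Section Algo.
Variables (n m : nat) (A : 'M[R]_(m, n)) (b : 'cV[R]_m).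
Variables (t : nat -> R) (eta gamma delta beta : R).
Variables (x : nat -> 'cV[R]_n) (lam : nat -> 'cV[R]_m).

Definition alpha k : R := (t k.+1 - eta) / eta.
Definition cc k : R := t k.+1 / eta.
Definition xbar k : 'cV[R]_n := x k + ((t k - 1) / t k.+1) *: (x k - x k.-1).
Definition lbar k : 'cV[R]_m := lam k + ((t k - 1) / t k.+1) *: (lam k - lam k.-1).
Definition pp k : 'cV[R]_m := cc k *: lbar k - alpha k *: lam k.
Definition rr k : 'cV[R]_m := alpha k *: (A *m x k) + b.

Definition Phi_common k (y : 'cV[R]_n) : R :=
  beta / 2 * sqnorm (A *m y - b) + 1 / (2 * gamma) * sqnorm (y - xbar k)
  + inner (pp k) (A *m y - b) + delta / 2 * sqnorm (cc k *: (A *m y) - rr k).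

Definition Phi_I (f : 'cV[R]_n -> R) k (y : 'cV[R]_n) : R := f y + Phi_common k y.
Definition Phi_II (g : 'cV[R]_n -> 'cV[R]_n) k (y : 'cV[R]_n) : R :=
  inner (g (xbar k)) y + Phi_common k y.

Definition is_argmin (phi : 'cV[R]_n -> R) (z : 'cV[R]_n) : Prop :=
  forall y, phi z <= phi y.

Definition lam_update k : Prop :=
  lam k.+1 = lbar k + delta *: (cc k *: (A *m x k.+1) - rr k).

Definition generated_I (f : 'cV[R]_n -> R) : Prop :=
  forall k, (1 <= k)%N -> is_argmin (Phi_I f k) (x k.+1) /\ lam_update k.
Definition generated_II (g : 'cV[R]_n -> 'cV[R]_n) : Prop :=
  forall k, (1 <= k)%N -> is_argmin (Phi_II g k) (x k.+1) /\ lam_update k.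

Definition implicit_form (gk : nat -> 'cV[R]_n) : Prop :=
  forall k, (1 <= k)%N ->
    x k.+1 - xbar k = - gamma *: (gk k + A^T *m (lam k.+1 + alpha k *: (lam k.+1 - lam k))
                                  + beta *: (A^T *m (A *m x k.+1 - b)))
    /\ lam k.+1 - lbar k = delta *: (A *m x k.+1 - b + alpha k *: (A *m (x k.+1 - x k))).

End Algo.
End Defs.

From Pilot Require Import Defs.
From HB Require Import structures.
From mathcomp Require Import all_boot all_order all_algebra.
From mathcomp Require Import all_classical all_reals all_analysis.
From mathcomp Require Import ring lra.
Import Order.TTheory GRing.Theory Num.Theory.
Import numFieldNormedType.Exports.
Local Open Scope classical_set_scope.
Local Open Scope ring_scope.

(** Both subproblem objectives have the form [F + Q], with [F] convex and
   differentiable ([f] in Case I, [0] in Case II) and [Q] a convex quadratic,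
   so [x_{k+1}] is a minimizer iff the gradient of [F + Q] vanishes there.
   Because [c_k = 1 + alpha_k], the multiplier update turns the gradient of the
   quadratic part at [x_{k+1}] into
   [(x_{k+1} - xbar_k) / gamma + A^T (lam_{k+1} + alpha_k (lam_{k+1} - lam_k))
    + beta A^T (A x_{k+1} - b)], and the update itself is the implicit
   multiplier equation. *)

Section InnerProduct.
Variables (R : realType) (p : nat).
Implicit Types u v w : 'cV[R]_p.

Lemma innerC u v : inner u v = inner v u.
Proof. by apply: eq_bigr => i _; rewrite mulrC. Qed.

Lemma innerDl u v w : inner (u + v) w = inner u w + inner v w.
Proof. by rewrite /inner -big_split; apply: eq_bigr => i _; rewrite mxE mulrDl. Qed.

Lemma innerZl (a : R) u v : inner (a *: u) v = a * inner u v.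
Proof. by rewrite /inner mulr_sumr; apply: eq_bigr => i _; rewrite mxE mulrA. Qed.

Lemma innerDr u v w : inner u (v + w) = inner u v + inner u w.
Proof. by rewrite innerC innerDl !(innerC u). Qed.

Lemma innerZr (a : R) u v : inner u (a *: v) = a * inner u v.
Proof. by rewrite innerC innerZl innerC. Qed.

Lemma innerNr u v : inner u (- v) = - inner u v.
Proof. by rewrite -scaleN1r innerZr mulN1r. Qed.

Lemma inner0l u : inner 0 u = 0.
Proof. by rewrite -(scale0r 0) innerZl mul0r. Qed.

Lemma sqnorm_ge0 u : 0 <= sqnorm u.
Proof. by apply: sumr_ge0 => i _; rewrite -expr2 sqr_ge0. Qed.

Lemma sqnorm_eq0 u : sqnorm u = 0 -> u = 0.
Proof.
move=> /eqP; rewrite psumr_eq0 => [/allP u0|i _]; last by rewrite -expr2 sqr_ge0.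
apply/matrixP => i j; rewrite (ord1 j) mxE.
by have /implyP/(_ isT) := u0 i (mem_index_enum i); rewrite -expr2 sqrf_eq0 => /eqP.
Qed.

Lemma sqnormDZ u v (s : R) :
  sqnorm (u + s *: v) = sqnorm u + 2 * s * inner u v + s ^+ 2 * sqnorm v.
Proof. by rewrite /sqnorm innerDl !innerDr !innerZl !innerZr (innerC v u); ring. Qed.

End InnerProduct.

Lemma inner_mulmx (R : realType) (q p : nat) (M : 'M[R]_(q, p)) u v :
  inner u (M *m v) = inner (M^T *m u) v.
Proof.
rewrite /inner; under eq_bigr => i _ do rewrite mxE mulr_sumr.
rewrite exchange_big; apply: eq_bigr => j _.
by rewrite mxE mulr_suml; apply: eq_bigr => i _; rewrite !mxE; ring.
Qed.

Section Gradient.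
Variables (R : realType) (n : nat).
Implicit Types (F Q : 'cV[R]_n -> R) (g : 'cV[R]_n -> 'cV[R]_n).

Lemma perturbed_lim_ge0 {D : R -> R} {l} c :
  D s @[s --> 0^'] --> l -> (forall s, 0 < s < 1 -> 0 <= D s + s * c) -> 0 <= l.
Proof.
move=> Dl D_ge0.
have : D s + s * c @[s --> 0^'] --> l + 0 * c.
  by apply: cvgD => //; apply: cvgMr_tmp; exact: cvg_within.
rewrite mul0r addr0 => Dcl.
have {}Dcl : D s + s * c @[s --> 0^'+] --> l.
  apply: cvg_trans Dcl; apply: cvg_fmap2; apply: within_subset => s /= s_gt0.
  by rewrite gt_eqF.
apply: (closed_cvg _ (@closed_ge _ 0) _ _ Dcl); near=> s; apply: D_ge0.
by apply/andP; split; near: s; [exact: nbhs_right_gt | exact: nbhs_right_lt].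
Unshelve. all: by end_near.
Qed.

Lemma is_gradient_dquot F g z h : is_gradient F g ->
  s^-1 * (F (s *: h + z) - F z) @[s --> 0^'] --> inner (g z) h.
Proof.
by move=> /(_ z) [F_diff <-]; rewrite -deriveE //; exact: (diff_derivable (v := h)).
Qed.

Lemma convex_gradient_ineq F g : convex_fun F -> is_gradient F g ->
  forall z y, F z + inner (g z) (y - z) <= F y.
Proof.
move=> F_cvx F_grad z y.
suff : 0 <= - inner (g z) (y - z) + (F y - F z) by lra.
apply: (perturbed_lim_ge0
  (D := fun s => - (s^-1 * (F (s *: (y - z) + z) - F z)) + (F y - F z)) 0).
  by apply: cvgD; [apply: cvgN; exact: is_gradient_dquot | exact: cvg_cst].
move=> s /andP[s_gt0 s_lt1]; rewrite mulr0 addr0.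
have -> : s *: (y - z) + z = s *: y + (1 - s) *: z.
  by apply/matrixP => i j; rewrite !mxE; ring.
have F_le := F_cvx y z s (ltW s_gt0) (ltW s_lt1).
rewrite [leRHS]addrC subr_ge0 mulrC ler_pdivrMr //; nra.
Qed.

Lemma argmin_convex_add_quadratic F Q (gF gQ z : 'cV[R]_n) (q : 'cV[R]_n -> R) :
  (forall y, F z + inner gF (y - z) <= F y) ->
  (forall h, s^-1 * (F (s *: h + z) - F z) @[s --> 0^'] --> inner gF h) ->
  (forall h s, Q (s *: h + z) = Q z + s * inner gQ h + s ^+ 2 * q h) ->
  (forall h, 0 <= q h) ->
  is_argmin (fun y => F y + Q y) z <-> gF + gQ = 0.
Proof.
move=> F_ge F_dquot Q_expand q_ge0; split=> [z_min | grad0 y /=]; last first.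
  have := Q_expand (y - z) 1; rewrite scale1r subrK mul1r expr1n mul1r => ->.
  have : inner gF (y - z) + inner gQ (y - z) = 0 by rewrite -innerDl grad0 inner0l.
  by have := F_ge y; have := q_ge0 (y - z); lra.
have dir_ge0 h : 0 <= inner (gF + gQ) h.
  rewrite innerDl; apply: (perturbed_lim_ge0
    (D := fun s => s^-1 * (F (s *: h + z) - F z) + inner gQ h) (q h)).
    by apply: cvgD; [exact: F_dquot | exact: cvg_cst].
  move=> s /andP[s_gt0 _]; have /= := z_min (s *: h + z); rewrite Q_expand => z_le.
  have -> : s^-1 * (F (s *: h + z) - F z) + inner gQ h + s * q h
      = s^-1 * (F (s *: h + z) - F z + s * inner gQ h + s ^+ 2 * q h).
    by field; rewrite gt_eqF.
  by apply: mulr_ge0; [rewrite invr_ge0 ltW | lra].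
have := dir_ge0 (gF + gQ); have := dir_ge0 (- (gF + gQ)); rewrite innerNr.
by move=> h1 h2; apply: sqnorm_eq0; rewrite /sqnorm; lra.
Qed.

Lemma argmin_quadratic Q (gQ z : 'cV[R]_n) (q : 'cV[R]_n -> R) :
  (forall h s, Q (s *: h + z) = Q z + s * inner gQ h + s ^+ 2 * q h) ->
  (forall h, 0 <= q h) ->
  is_argmin Q z <-> gQ = 0.
Proof.
move=> Q_expand q_ge0.
have := argmin_convex_add_quadratic (fun=> 0) Q 0 gQ z q _ _ Q_expand q_ge0.
have -> : (fun y => 0 + Q y) = Q by apply: funext => y; rewrite add0r.
rewrite !add0r; apply=> [y | h]; first by rewrite inner0l.
rewrite inner0l oppr0; under eq_fun do rewrite mulr0.
exact: cvg_cst.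
Qed.

End Gradient.

Lemma scaleV_addr_eq0 (K : fieldType) (V : lmodType K) (c : K) (d w : V) :
  c != 0 -> c^-1 *: d + w = 0 <-> d = - c *: w.
Proof.
move=> c_neq0; split=> [/eqP | ->]; last by rewrite scaleNr scalerN scalerK // addNr.
rewrite addr_eq0 => /eqP dw.
by rewrite -(scalerKV c_neq0 d) dw scalerN scaleNr.
Qed.

Section Subproblem.
Variables (R : realType) (n m : nat) (A : 'M[R]_(m, n)) (b : 'cV[R]_m).
Variables (t : nat -> R) (eta gamma delta beta : R).
Variables (x : nat -> 'cV[R]_n) (lam : nat -> 'cV[R]_m).
Hypotheses (eta_neq0 : eta != 0) (gamma_gt0 : 0 < gamma).
Hypotheses (delta_ge0 : 0 <= delta) (beta_ge0 : 0 <= beta).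

Local Notation alpha := (alpha t eta).
Local Notation cc := (cc t eta).
Local Notation xbar := (xbar t x).
Local Notation lbar := (lbar t lam).
Local Notation pp := (pp t eta lam).
Local Notation rr := (rr A b t eta x).
Local Notation Phi_common := (Phi_common A b t eta gamma delta beta x lam).
Local Notation lam_update := (lam_update A b t eta delta x lam).

Definition grad_Phi_common k (z : 'cV[R]_n) : 'cV[R]_n :=
  gamma^-1 *: (z - xbar k) + A^T *m (pp k + (delta * cc k) *: (cc k *: (A *m z) - rr k))
  + beta *: (A^T *m (A *m z - b)).

Definition curv_Phi_common k (h : 'cV[R]_n) : R :=
  beta / 2 * sqnorm (A *m h) + 1 / (2 * gamma) * sqnorm h
  + delta / 2 * sqnorm (cc k *: (A *m h)).

Lemma Phi_common_expand k z h s :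
  Phi_common k (s *: h + z) = Phi_common k z + s * inner (grad_Phi_common k z) h
                              + s ^+ 2 * curv_Phi_common k h.
Proof.
rewrite /Phi_common /grad_Phi_common /curv_Phi_common.
have -> : A *m (s *: h + z) - b = (A *m z - b) + s *: (A *m h).
  by rewrite mulmxDr -(scalemxAr s A h) [RHS]addrC addrA.
have -> : s *: h + z - xbar k = (z - xbar k) + s *: h by rewrite [RHS]addrC addrA.
have -> : cc k *: (A *m (s *: h + z)) - rr k = (cc k *: (A *m z) - rr k) + s *: (cc k *: (A *m h)).
  rewrite mulmxDr -(scalemxAr s A h); move: (A *m h) (A *m z) => Ah Az.
  by apply/matrixP => i j; rewrite !mxE; ring.
rewrite !sqnormDZ innerDr innerZr.
move: (A *m z - b) (z - xbar k) (cc k *: (A *m z) - rr k) (pp k) => u v w p.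
rewrite !innerDl !innerZl -!inner_mulmx innerDl innerZl innerZr.
by field; rewrite gt_eqF.
Qed.

Lemma curv_Phi_common_ge0 k h : 0 <= curv_Phi_common k h.
Proof.
rewrite /curv_Phi_common; do 2?apply: addr_ge0; apply: mulr_ge0;
  rewrite ?sqnorm_ge0 ?divr_ge0 ?mulr_ge0 //; exact: ltW.
Qed.

Lemma cc_alpha k : cc k = 1 + alpha k.
Proof. by rewrite /Defs.cc /Defs.alpha; field. Qed.

Lemma lam_update_iff k : lam_update k <->
  lam k.+1 - lbar k = delta *: (A *m x k.+1 - b + alpha k *: (A *m (x k.+1 - x k))).
Proof.
rewrite /Defs.lam_update.
have -> : cc k *: (A *m x k.+1) - rr k = A *m x k.+1 - b + alpha k *: (A *m (x k.+1 - x k)).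
  rewrite /rr mulmxBr cc_alpha; move: (A *m x k.+1) (A *m x k) => u v.
  by apply/matrixP => i j; rewrite !mxE; ring.
split=> [-> | <-]; first by rewrite addrAC subrr add0r.
by rewrite addrCA subrr addr0.
Qed.

Lemma multiplier_next k : lam_update k ->
  pp k + (delta * cc k) *: (cc k *: (A *m x k.+1) - rr k)
  = lam k.+1 + alpha k *: (lam k.+1 - lam k).
Proof.
rewrite /Defs.lam_update /Defs.pp cc_alpha => ->.
move: (lbar k) (lam k) (cc k *: (A *m x k.+1) - rr k) => lb l w.
by apply/matrixP => i j; rewrite !mxE; ring.
Qed.

Lemma stationary_iff_x_step k (g : 'cV[R]_n) : lam_update k ->
  g + grad_Phi_common k (x k.+1) = 0 <->
  x k.+1 - xbar k = - gamma *: (g + A^T *m (lam k.+1 + alpha k *: (lam k.+1 - lam k))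
                                + beta *: (A^T *m (A *m x k.+1 - b))).
Proof.
move=> upd; rewrite /grad_Phi_common multiplier_next // -scaleV_addr_eq0 ?gt_eqF //.
by rewrite !addrA (addrC g).
Qed.

Lemma generated_iff_implicit_form (Phi : nat -> 'cV[R]_n -> R) (gk : nat -> 'cV[R]_n) :
  (forall k, is_argmin (Phi k) (x k.+1) <-> gk k + grad_Phi_common k (x k.+1) = 0) ->
  (forall k, (1 <= k)%N -> is_argmin (Phi k) (x k.+1) /\ lam_update k) <->
  implicit_form A b t eta gamma delta beta x lam gk.
Proof.
move=> argmin_iff; split=> gen k /gen.
  case=> /argmin_iff stat upd.
  by split; [exact/(stationary_iff_x_step _ _ upd) | exact/lam_update_iff].
case=> x_step /lam_update_iff upd.
by split=> //; apply/argmin_iff/(stationary_iff_x_step _ _ upd).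
Qed.

Lemma argmin_Phi_I_iff f gradf k : convex_fun f -> is_gradient f gradf ->
  is_argmin (Phi_I A b t eta gamma delta beta x lam f k) (x k.+1) <->
  gradf (x k.+1) + grad_Phi_common k (x k.+1) = 0.
Proof.
move=> f_cvx f_grad; apply: argmin_convex_add_quadratic.
- exact: convex_gradient_ineq.
- by move=> h; exact: is_gradient_dquot.
- exact: Phi_common_expand.
- exact: curv_Phi_common_ge0.
Qed.

Lemma argmin_Phi_II_iff g k :
  is_argmin (Phi_II A b t eta gamma delta beta x lam g k) (x k.+1) <->
  g (xbar k) + grad_Phi_common k (x k.+1) = 0.
Proof.
apply: argmin_quadratic (curv_Phi_common_ge0 k) => h s.
by rewrite /Phi_II Phi_common_expand innerDl innerDr innerZr; ring.
Qed.

End Subproblem.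

Theorem proposition2p1 (R : realType) (n m : nat)
  (f : 'cV[R]_n -> R) (gradf : 'cV[R]_n -> 'cV[R]_n)
  (A : 'M[R]_(m, n)) (b : 'cV[R]_m)
  (t : nat -> R) (rho eta gamma delta beta : R)
  (x : nat -> 'cV[R]_n) (lam : nat -> 'cV[R]_m) :
  convex_fun f -> is_gradient f gradf -> continuous gradf ->
  param_assumptions t rho eta gamma delta beta ->
  x 0%N = x 1%N -> lam 0%N = lam 1%N ->
  (generated_I A b t eta gamma delta beta x lam f <->
     implicit_form A b t eta gamma delta beta x lam (fun k => gradf (x k.+1)))
  /\
  (forall L : R, 0 < L -> lipschitz_grad gradf L -> gamma <= 1 / L ->
     (generated_II A b t eta gamma delta beta x lam gradf <->
        implicit_form A b t eta gamma delta beta x lam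
          (fun k => gradf (xbar t x k)))).
Proof.
move=> f_cvx f_grad _ [_ _ _ _ [rho_gt0 _ rho_le_eta _ [gamma_gt0 delta_gt0 beta_ge0]]] _ _.
have eta_neq0 : eta != 0 by rewrite gt_eqF // (lt_le_trans rho_gt0 rho_le_eta).
split=> [|L _ _ _]; apply: generated_iff_implicit_form => // k.
  by apply: argmin_Phi_I_iff => //; exact: ltW.
by apply: argmin_Phi_II_iff => //; exact: ltW.
Qed.
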